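(* Let $R>0$. Every $\alpha\in(0,\frac{1}{8R}]$ satisfies $1-3\alpha R-\alpha^2R^2-\alpha^3R^3\ge 0$ and $1-8\alpha R+\alpha^2R^2-2\alpha^3R^3\ge 0$. Moreover, let $\mathbf L\colon\mathbb R^n\times\mathbb R^m\to\mathbb R$ be an $R$-smooth convex-concave function with a saddle point $\mathbf z^\star$, let $\mathbf z^0\in\mathbb R^n\times\mathbb R^m$, and let $\alpha=\frac{1}{8R}$ in the EAG-C iteration $$\mathbf z^{k+1/2}=\mathbf z^k+\tfrac{1}{k+2}(\mathbf z^0-\mathbf z^k)-\alpha\,\mathbf G(\mathbf z^k),\qquad \mathbf z^{k+1}=\mathbf z^k+\tfrac{1}{k+2}(\mathbf z^0-\mathbf z^k)-\alpha\,\mathbf G(\mathbf z^{k+1/2}),\quad k\ge0.$$ Then for all $k\ge 0$, $$\|\nabla\mathbf L(\mathbf z^k)\|^2\le\frac{260R^2\|\mathbf z^0-\mathbf z^\star\|^2}{(k+1)^2}.$$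
   Context: Write $\mathbf z=(\mathbf x,\mathbf y)$. $\mathbf L$ convex-concave: convex in $\mathbf x$ for fixed $\mathbf y$, concave in $\mathbf y$ for fixed $\mathbf x$. A saddle point $(\mathbf x^\star,\mathbf y^\star)$ satisfies $\mathbf L(\mathbf x^\star,\mathbf y)\le\mathbf L(\mathbf x^\star,\mathbf y^\star)\le\mathbf L(\mathbf x,\mathbf y^\star)$ for all $\mathbf x,\mathbf y$. $\mathbf G(\mathbf z)=(\nabla_{\mathbf x}\mathbf L(\mathbf x,\mathbf y),-\nabla_{\mathbf y}\mathbf L(\mathbf x,\mathbf y))$; $\mathbf L$ is $R$-smooth if it is differentiable and $\mathbf G$ is $R$-Lipschitz. *)

From HB Require Import structures.
From mathcomp Require Import all_boot all_order all_algebra.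
From mathcomp Require Import all_classical all_reals all_analysis.
Set Implicit Arguments. Unset Strict Implicit. Unset Printing Implicit Defensive.
Import Order.TTheory GRing.Theory Num.Theory.
Import numFieldNormedType.Exports.
Local Open Scope ring_scope.

Section Defs.
Variable R : realType.

Definition dotv (k : nat) (u v : 'rV[R]_k) : R := \sum_(i < k) u 0 i * v 0 i.

Definition zpt (n m : nat) := ('rV[R]_n * 'rV[R]_m)%type.

Definition zadd n m (z w : zpt n m) : zpt n m := (z.1 + w.1, z.2 + w.2).
Definition zsub n m (z w : zpt n m) : zpt n m := (z.1 - w.1, z.2 - w.2).
Definition zscale n m (a : R) (z : zpt n m) : zpt n m := (a *: z.1, a *: z.2).

Definition zsqnorm n m (z : zpt n m) : R := dotv z.1 z.1 + dotv z.2 z.2.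
Definition znorm n m (z : zpt n m) : R := Num.sqrt (zsqnorm z).

Fixpoint eagc n m (G : zpt n m -> zpt n m) (a : R) (z0 : zpt n m) (k : nat)
  : zpt n m :=
  match k with
  | 0 => z0
  | k'.+1 =>
      let zk := eagc G a z0 k' in
      let base := zadd zk (zscale (k'.+2%:R)^-1 (zsub z0 zk)) in
      let zhalf := zsub base (zscale a (G zk)) in
      zsub base (zscale a (G zhalf))
  end.
End Defs.

From HB Require Import structures.
From mathcomp Require Import all_boot all_order all_algebra.
From mathcomp Require Import all_classical all_reals all_analysis.
From mathcomp Require Import ring lra.
Import Order.TTheory GRing.Theory Num.Theory.
Import numFieldNormedType.Exports.
Local Open Scope ring_scope.

(* With [g k = a G (z k)], a = 1/(8 Rs), the operator [a G] is monotone and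
   1/8-Lipschitz, and the Lyapunov function
     V k = (k+1)(2k+3)/4 |g k|^2 + (k+1) <g k, z k - z0>
   is nonincreasing along EAG-C: one step combines monotonicity between z (k+1) and z k,
   the Lipschitz bound between z (k+1) and z (k+1/2), and an explicit sum of squares.
   Since G zs = 0 at a saddle point, V k <= V 0 = 3/4 |g 0|^2 <= |z0 - zs|^2 / 256.
   Monotonicity gives <g k, z k - zs> >= 0 and completing the square in
   <g k, zs - z0> then yields (k+1)^2 |g k|^2 <= 259/64 |z0 - zs|^2.
   Convexity-concavity is used only through the first-order inequalities, which make
   G = (grad_x L, - grad_y L) monotone and force it to vanish at a saddle point. *)

Lemma diff_le_of_increments {R : realType} {V : normedModType R}
    (f : V -> R) (z v : V) (C : R) :
  differentiable f z ->
  (forall t : R, 0 < t -> t <= 1 -> f (t *: v + z) - f z <= t * C) ->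
  'd f z v <= C.
Proof.
move=> df incr; rewrite -deriveE //.
have dq : derivable f z v := diff_derivable df.
rewrite /derive (cvg_at_rightE _ _ dq); apply: limr_le.
  apply: cvgP (cvg_trans _ dq) => A [e e0 Ae].
  by exists e => // t et t0; apply: Ae => //; rewrite gt_eqF.
near=> t.
rewrite /= ler_pdivrMl; last by near: t; exact: nbhs_right_gt.
apply: incr; first by near: t; exact: nbhs_right_gt.
by near: t; apply: nbhs_right_le.
Unshelve. all: by end_near.
Qed.

Lemma diff_ge_of_increments {R : realType} {V : normedModType R}
    (f : V -> R) (z v : V) (C : R) :
  differentiable f z ->
  (forall t : R, 0 < t -> t <= 1 -> t * C <= f (t *: v + z) - f z) ->
  C <= 'd f z v.
Proof.
move=> df incr; rewrite -[leLHS]opprK lerNl.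
have := @diff_le_of_increments _ _ (- f) z v (- C) (differentiableN df).
rewrite diffN //; apply=> t t0 t1 /=.
by rewrite opprfctE; have := incr t t0 t1; lra.
Qed.

Section InnerProduct.
Context {R : realType}.

Lemma segment_pointE (V : lmodType R) (t : R) (a b : V) :
  t *: (b - a) + a = t *: b + (1 - t) *: a.
Proof. by rewrite scalerBr scalerBl scale1r addrA addrAC. Qed.

Lemma dotvC k (u v : 'rV[R]_k) : dotv u v = dotv v u.
Proof. by apply: eq_bigr => i _; rewrite mulrC. Qed.

Lemma dotvDl k (u v w : 'rV[R]_k) : dotv (u + v) w = dotv u w + dotv v w.
Proof. by rewrite /dotv -big_split; apply: eq_bigr => i _; rewrite mxE mulrDl. Qed.

Lemma dotvZl k a (u w : 'rV[R]_k) : dotv (a *: u) w = a * dotv u w.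
Proof. by rewrite /dotv mulr_sumr; apply: eq_bigr => i _; rewrite mxE mulrA. Qed.

Lemma dotvNl k (u w : 'rV[R]_k) : dotv (- u) w = - dotv u w.
Proof. by rewrite -scaleN1r dotvZl mulN1r. Qed.

Lemma dotvDr k (u v w : 'rV[R]_k) : dotv w (u + v) = dotv w u + dotv w v.
Proof. by rewrite dotvC dotvDl !(dotvC _ w). Qed.

Lemma dotvNr k (u w : 'rV[R]_k) : dotv w (- u) = - dotv w u.
Proof. by rewrite dotvC dotvNl dotvC. Qed.

Lemma dotv0r k (u : 'rV[R]_k) : dotv u 0 = 0.
Proof. by rewrite /dotv big1 // => i _; rewrite mxE mulr0. Qed.

Lemma dotv_ge0 k (u : 'rV[R]_k) : 0 <= dotv u u.
Proof. by apply: sumr_ge0 => i _; rewrite -expr2 sqr_ge0. Qed.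

Lemma dotv_le0_eq0 k (u : 'rV[R]_k) : dotv u u <= 0 -> u = 0.
Proof.
move=> u_le0; have /eqP : dotv u u = 0 by apply/eqP; rewrite eq_le u_le0 dotv_ge0.
rewrite psumr_eq0 => [/allP u0|i _]; last by rewrite -expr2 sqr_ge0.
apply/rowP => i; have /implyP := u0 i (mem_index_enum i).
by rewrite mulf_eq0 orbb mxE => /(_ isT)/eqP.
Qed.

Context {n m : nat}.
Local Notation T := ('rV[R]_n * 'rV[R]_m)%type.

Lemma scale_pairD (t : R) (a c : 'rV[R]_n) (b d : 'rV[R]_m) :
  t *: ((a, b) : T) + (c, d) = (t *: a + c, t *: b + d).
Proof. by []. Qed.

Definition zdot (z w : T) : R := dotv z.1 w.1 + dotv z.2 w.2.

Lemma zsqnormE (z : T) : zsqnorm z = zdot z z. Proof. by []. Qed.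

Lemma zdotC (z w : T) : zdot z w = zdot w z.
Proof. by rewrite /zdot dotvC [dotv z.2 _]dotvC. Qed.

Lemma zdotDl (z w v : T) : zdot (z + w) v = zdot z v + zdot w v.
Proof. by rewrite /zdot /= !dotvDl addrACA. Qed.

Lemma zdotZl a (z v : T) : zdot (a *: z) v = a * zdot z v.
Proof. by rewrite /zdot /= !dotvZl mulrDr. Qed.

Lemma zdotNl (z v : T) : zdot (- z) v = - zdot z v.
Proof. by rewrite -scaleN1r zdotZl mulN1r. Qed.

Lemma zdotDr (z w v : T) : zdot v (z + w) = zdot v z + zdot v w.
Proof. by rewrite zdotC zdotDl !(zdotC v). Qed.

Lemma zdotZr a (z v : T) : zdot v (a *: z) = a * zdot v z.
Proof. by rewrite zdotC zdotZl zdotC. Qed.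

Lemma zdotNr (z v : T) : zdot v (- z) = - zdot v z.
Proof. by rewrite zdotC zdotNl zdotC. Qed.

Lemma zdotBr (z w v : T) : zdot v (z - w) = zdot v z - zdot v w.
Proof. by rewrite zdotDr zdotNr. Qed.

Lemma zsqnorm_ge0 (z : T) : 0 <= zsqnorm z.
Proof. by rewrite addr_ge0 // dotv_ge0. Qed.

Lemma zsqnorm_pairN (x : 'rV[R]_n) (y : 'rV[R]_m) : zsqnorm ((x, - y) : T) = zsqnorm (x, y).
Proof. by rewrite !zsqnormE /zdot /= dotvNl dotvNr opprK. Qed.

Lemma zsqnormZ a (z : T) : zsqnorm (a *: z) = a ^+ 2 * zsqnorm z.
Proof. by rewrite !zsqnormE zdotZl zdotZr mulrA -expr2. Qed.

Lemma zsqnorm_le_of_znorm_le {c : R} {z w : T} :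
  0 <= c -> znorm z <= c * znorm w -> zsqnorm z <= c ^+ 2 * zsqnorm w.
Proof.
move=> c0 le_zw; rewrite -(sqr_sqrtr (zsqnorm_ge0 z)) -(sqr_sqrtr (zsqnorm_ge0 w)).
by rewrite -exprMn lerXn2r ?nnegrE ?mulr_ge0 ?sqrtr_ge0.
Qed.

End InnerProduct.

Definition saddle_grad {R : realType} {n m : nat} (gx : 'rV[R]_n * 'rV[R]_m -> 'rV[R]_n)
    (gy : 'rV[R]_n * 'rV[R]_m -> 'rV[R]_m) (z : 'rV[R]_n * 'rV[R]_m) :
  'rV[R]_n * 'rV[R]_m := (gx z, - gy z).

Definition saddle_point {R : realType} {n m : nat} (L : 'rV[R]_n * 'rV[R]_m -> R)
    (zs : 'rV[R]_n * 'rV[R]_m) :=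
  forall x y, L (zs.1, y) <= L zs /\ L zs <= L (x, zs.2).

Section ConvexConcave.
Context {R : realType} {n m : nat}.
Local Notation T := ('rV[R]_n * 'rV[R]_m)%type.
Context {L : T -> R} {gx : T -> 'rV[R]_n} {gy : T -> 'rV[R]_m}.
Hypothesis L_grad : forall z, differentiable L z /\
  forall h : T, 'd L z h = dotv (gx z) h.1 + dotv (gy z) h.2.
Hypothesis L_convex : forall (y : 'rV[R]_m) (x1 x2 : 'rV[R]_n) (t : R),
  0 <= t -> t <= 1 -> L (t *: x1 + (1 - t) *: x2, y) <= t * L (x1, y) + (1 - t) * L (x2, y).
Hypothesis L_concave : forall (x : 'rV[R]_n) (y1 y2 : 'rV[R]_m) (t : R),
  0 <= t -> t <= 1 -> t * L (x, y1) + (1 - t) * L (x, y2) <= L (x, t *: y1 + (1 - t) *: y2).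

Lemma convex_grad_le x y x' : dotv (gx (x, y)) (x' - x) <= L (x', y) - L (x, y).
Proof.
have [dL dLE] := L_grad (x, y).
have := @diff_le_of_increments _ _ L (x, y) (x' - x, 0) _ dL.
rewrite dLE /= dotv0r addr0; apply=> t t0 t1.
rewrite scale_pairD scaler0 add0r segment_pointE.
by have := L_convex y x' x t (ltW t0) t1; lra.
Qed.

Lemma concave_grad_ge x y y' : L (x, y') - L (x, y) <= dotv (gy (x, y)) (y' - y).
Proof.
have [dL dLE] := L_grad (x, y).
have := @diff_ge_of_increments _ _ L (x, y) (0, y' - y) _ dL.
rewrite dLE /= dotv0r add0r; apply=> t t0 t1.
rewrite scale_pairD scaler0 add0r segment_pointE.
by have := L_concave x y' y t (ltW t0) t1; lra.
Qed.

Lemma saddle_grad_monotone (z w : T) :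
  0 <= zdot (saddle_grad gx gy z - saddle_grad gx gy w) (z - w).
Proof.
case: z w => [x1 y1] [x2 y2].
have := convex_grad_le x1 y1 x2; have := convex_grad_le x2 y2 x1.
have := concave_grad_ge x1 y1 y2; have := concave_grad_ge x2 y2 y1.
rewrite /zdot /= !(dotvDl, dotvNl, dotvDr, dotvNr); lra.
Qed.

Lemma saddle_grad_eq0 (zs : T) : saddle_point L zs -> saddle_grad gx gy zs = 0.
Proof.
case: zs => xs ys saddle; have [dL dLE] := L_grad (xs, ys).
rewrite /saddle_grad; have [-> ->] : gx (xs, ys) = 0 /\ gy (xs, ys) = 0.
  split; apply: dotv_le0_eq0.
  - rewrite -oppr_ge0 -dotvNr.
    have := @diff_ge_of_increments _ _ L (xs, ys) (- gx (xs, ys), 0) 0 dL.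
    rewrite dLE /= dotv0r addr0; apply=> t t0 t1.
    have [_] := saddle (t *: - gx (xs, ys) + xs) ys.
    by rewrite scale_pairD scaler0 add0r mulr0; lra.
  - have := @diff_le_of_increments _ _ L (xs, ys) (0, gy (xs, ys)) 0 dL.
    rewrite dLE /= dotv0r add0r; apply=> t t0 t1.
    have [+ _] := saddle xs (t *: gy (xs, ys) + ys).
    by rewrite scale_pairD scaler0 add0r mulr0; lra.
by rewrite oppr0.
Qed.

End ConvexConcave.

Section AnchoredStep.
Context {R : realType} {n m : nat}.
Local Notation T := ('rV[R]_n * 'rV[R]_m)%type.

Lemma anchored_step_gap {Q : R} {g h g' : T} : 2 <= Q ->
  zsqnorm (g' - h) <= 64^-1 * zsqnorm (g - h) ->
  Q * (2 * Q + 1) / 4 * zsqnorm g' - Q ^+ 2 * zdot g' h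
    <= (Q - 1) * (2 * Q - 1) / 4 * zsqnorm g - Q * (Q - 1) * zdot g h.
Proof.
move=> Q2 lip.
(* 32 W (6Q-1) (RHS - LHS) = 64 Q^2 W (6Q-1) (Lipschitz slack)
     + 8 Q W |(6Q-1) g' - 6Q h|^2 + (6Q-1) |W g - Q(15Q-16) h|^2 + 8 Q^2 (27Q-31) |h|^2 *)
pose W := 15 * Q ^+ 2 - 24 * Q + 8.
have W0 : 0 < W by rewrite /W; nra.
have C0 : 0 < 32 * W * (6 * Q - 1) by rewrite !mulr_gt0 //; lra.
have P1 : 0 <= 2 * Q ^+ 2 * (32 * W * (6 * Q - 1)) *
    (64^-1 * zsqnorm (g - h) - zsqnorm (g' - h)).
  by rewrite !mulr_ge0 ?sqr_ge0 ?subr_ge0 ?(ltW W0) //; lra.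
have P2 : 0 <= 8 * Q * W * zsqnorm ((6 * Q - 1) *: g' - (6 * Q) *: h).
  by rewrite !mulr_ge0 ?zsqnorm_ge0 //; lra.
have P3 : 0 <= (6 * Q - 1) * zsqnorm (W *: g - (Q * (15 * Q - 16)) *: h).
  by rewrite mulr_ge0 ?zsqnorm_ge0 //; lra.
have P4 : 0 <= 8 * Q ^+ 2 * (27 * Q - 31) * zsqnorm h.
  by rewrite !mulr_ge0 ?sqr_ge0 ?zsqnorm_ge0 //; lra.
rewrite -subr_ge0 -(pmulr_rge0 _ C0).
move: P1 P2 P3 P4; rewrite !zsqnormE /W.
rewrite !(zdotDl, zdotDr, zdotNl, zdotNr, zdotZl, zdotZr) (zdotC h g) (zdotC h g').
move=> P1 P2 P3 P4.
lra.
Qed.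

(* For g, h, g' the scaled operator at z k, z (k+1/2), z (k+1), Q = k+2 and
   v = (z k - z0) / Q, this is the decrease of [eagc_energy] over one step. *)
Lemma anchored_step {Q : R} {v g h g' : T} : 2 <= Q ->
  0 <= zdot (g' - g) (- v - h) ->
  zsqnorm (g' - h) <= 64^-1 * zsqnorm (g - h) ->
  Q * (2 * Q + 1) / 4 * zsqnorm g' + Q * zdot g' ((Q - 1) *: v - h)
    <= (Q - 1) * (2 * Q - 1) / 4 * zsqnorm g + (Q - 1) * zdot g (Q *: v).
Proof.
move=> Q2 mono lip; have := anchored_step_gap Q2 lip.
have : 0 <= Q * (Q - 1) * zdot (g' - g) (- v - h) by rewrite !mulr_ge0 //; lra.
rewrite !zsqnormE !(zdotDl, zdotDr, zdotNl, zdotNr, zdotZl, zdotZr).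
lra.
Qed.

End AnchoredStep.

Section EAGC.
Context {R : realType} {n m : nat}.
Local Notation T := ('rV[R]_n * 'rV[R]_m)%type.
Variables (G : T -> T) (a : R) (z0 : T).
Hypothesis a_ge0 : 0 <= a.
Hypothesis G_monotone : forall z w : T, 0 <= zdot (G z - G w) (z - w).
Hypothesis aG_lipschitz : forall z w : T,
  zsqnorm (a *: G z - a *: G w) <= 64^-1 * zsqnorm (z - w).

Local Notation z := (eagc G a z0).

Lemma eagcS k : let zk := z k in let base := zk + (k.+2%:R)^-1 *: (z0 - zk) in
  z k.+1 = base - a *: G (base - a *: G zk).
Proof. by []. Qed.

Lemma aG_monotone (x w : T) : 0 <= zdot (a *: G x - a *: G w) (x - w).
Proof. by rewrite -scalerBr zdotZl mulr_ge0. Qed.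

Definition eagc_energy (k : nat) : R :=
  let p := k.+1%:R in
  p * (2 * p + 1) / 4 * zsqnorm (a *: G (z k)) + p * zdot (a *: G (z k)) (z k - z0).

Lemma eagc_energy_decr k : eagc_energy k.+1 <= eagc_energy k.
Proof.
pose Q : R := k.+2%:R; pose v := Q^-1 *: (z k - z0).
pose zh := z k - v - a *: G (z k); pose h := a *: G zh.
have Q2 : 2 <= Q by rewrite /Q ler_nat.
have anchor : z k + Q^-1 *: (z0 - z k) = z k - v by rewrite -opprB scalerN.
have zS : z k.+1 = z k - v - h by rewrite eagcS /= -/Q anchor.
have zk_z0 : z k - z0 = Q *: v by rewrite scalerA mulfV ?scale1r // pnatr_eq0.
have dz : z k.+1 - z k = - v - h by rewrite zS addrAC [_ - z k]addrAC subrr add0r.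
have dzh : z k.+1 - zh = a *: G (z k) - h by rewrite zS opprB addrC subrKA.
have := aG_lipschitz (z k.+1) zh; rewrite dzh => lip.
have := aG_monotone (z k.+1) (z k); rewrite dz => mono.
have zS_z0 : z k.+1 - z0 = (Q - 1) *: v - h.
  by rewrite scalerBl scale1r -zk_z0 zS addrAC [_ - v - z0]addrAC.
have pk : k.+1%:R = Q - 1 :> R by rewrite /Q -[k.+2]addn1 natrD addrK.
rewrite /eagc_energy -/Q pk zS_z0 zk_z0.
by have := anchored_step Q2 mono lip; lra.
Qed.

Lemma eagc_energy_le k : eagc_energy k <= 3 / 4 * zsqnorm (a *: G z0).
Proof.
elim: k => [|k IH]; last exact: le_trans (eagc_energy_decr k) IH.
by rewrite /eagc_energy /= zdotBr subrr; lra.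
Qed.

Lemma eagc_sqnorm_bound (zs : T) k : G zs = 0 ->
  k.+1%:R ^+ 2 * zsqnorm (a *: G (z k)) <= 259 / 64 * zsqnorm (z0 - zs).
Proof.
move=> Gzs0; pose p : R := k.+1%:R.
have init := aG_lipschitz z0 zs; rewrite Gzs0 scaler0 subr0 in init.
have mono := aG_monotone (z k) zs; rewrite Gzs0 scaler0 subr0 in mono.
have energy := eagc_energy_le k.
rewrite /eagc_energy -/p -(subrKA zs (z k) (- z0)) -[zs - z0]opprB in energy.
(* completing the square bounds p <g, zs - z0> from below *)
have sq := zsqnorm_ge0 ((p / 2) *: (a *: G (z k)) - (z0 - zs)).
have p_mono := mulr_ge0 (ler0n R k.+1) mono.
have p_sqnorm := mulr_ge0 (ler0n R k.+1) (zsqnorm_ge0 (a *: G (z k))).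
move: (a *: G (z k)) (a *: G z0) (z0 - zs) (z k - zs) => g g0 d u
  in init energy sq p_mono p_sqnorm *.
rewrite zdotBr in energy.
rewrite zsqnormE !(zdotDl, zdotDr, zdotNl, zdotNr, zdotZl, zdotZr) -!zsqnormE in sq.
rewrite (zdotC d g) in sq.
rewrite -/p in p_mono p_sqnorm *; lra.
Qed.

End EAGC.

Lemma eagc_grad_sqnorm_le {R : realType} {n m : nat} (Rs : R)
    (G : 'rV[R]_n * 'rV[R]_m -> 'rV[R]_n * 'rV[R]_m) (z0 zs : 'rV[R]_n * 'rV[R]_m) :
  0 < Rs ->
  (forall z w, zsqnorm (G z - G w) <= Rs ^+ 2 * zsqnorm (z - w)) ->
  (forall z w, 0 <= zdot (G z - G w) (z - w)) ->
  G zs = 0 ->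
  forall k, zsqnorm (G (eagc G (8 * Rs)^-1 z0 k))
              <= 260 * Rs ^+ 2 * zsqnorm (z0 - zs) / k.+1%:R ^+ 2.
Proof.
move=> Rs_gt0 G_lip G_mono Gzs0 k; pose a := (8 * Rs)^-1.
have a_ge0 : 0 <= a by rewrite invr_ge0 mulr_ge0 // ltW.
have a2Rs2 : a ^+ 2 * Rs ^+ 2 = 64^-1 by rewrite /a; field; rewrite gt_eqF.
have aG_lip z w : zsqnorm (a *: G z - a *: G w) <= 64^-1 * zsqnorm (z - w).
  by rewrite -scalerBr zsqnormZ -a2Rs2 -mulrA ler_wpM2l ?sqr_ge0.
have := eagc_sqnorm_bound G a z0 a_ge0 G_mono aG_lip zs k Gzs0.
rewrite zsqnormZ ler_pdivlMr ?exprn_gt0 //.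
have := mulr_ge0 (sqr_ge0 Rs) (zsqnorm_ge0 (z0 - zs)).
set D := zsqnorm (z0 - zs); set S := zsqnorm (G _); set p := k.+1%:R => RsD bound.
have -> : S * p ^+ 2 = 64 * Rs ^+ 2 * (p ^+ 2 * (a ^+ 2 * S)).
  by rewrite /a; field; rewrite gt_eqF.
have := ler_wpM2l (mulr_ge0 (ler0n R 64) (sqr_ge0 Rs)) bound.
lra.
Qed.

Lemma eagc_coeffs_ge0 {R : realType} (Rs a : R) : 0 < Rs -> 0 < a -> a <= (8 * Rs)^-1 ->
  0 <= 1 - 3 * a * Rs - a ^+ 2 * Rs ^+ 2 - a ^+ 3 * Rs ^+ 3 /\
  0 <= 1 - 8 * a * Rs + a ^+ 2 * Rs ^+ 2 - 2 * a ^+ 3 * Rs ^+ 3.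
Proof.
move=> Rs_gt0 a_gt0; rewrite -div1r ler_pdivlMr ?mulr_gt0 // mulrCA.
rewrite -[3 * _ * _]mulrA -[8 * _ * _]mulrA -[2 * _ * _]mulrA -!exprMn.
move: (a * Rs) (mulr_gt0 a_gt0 Rs_gt0) => r r_gt0 r_le.
have : 0 <= r ^+ 2 * (1 - 2 * r) by rewrite mulr_ge0 ?sqr_ge0 //; lra.
split; nra.
Qed.

Theorem corollary1 (R : realType) (Rs : R) (hRs : 0 < Rs) :
  (forall a : R, 0 < a -> a <= (8 * Rs)^-1 ->
      0 <= 1 - 3 * a * Rs - a ^+ 2 * Rs ^+ 2 - a ^+ 3 * Rs ^+ 3 /\
      0 <= 1 - 8 * a * Rs + a ^+ 2 * Rs ^+ 2 - 2 * a ^+ 3 * Rs ^+ 3) /\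
  (forall (n m : nat) (L : 'rV[R]_n * 'rV[R]_m -> R)
          (gx : 'rV[R]_n * 'rV[R]_m -> 'rV[R]_n)
          (gy : 'rV[R]_n * 'rV[R]_m -> 'rV[R]_m)
          (zs z0 : 'rV[R]_n * 'rV[R]_m),
     (* L is differentiable, with gradient (gx z, gy z) at z *)
     (forall z, differentiable L z /\
        forall h : 'rV[R]_n * 'rV[R]_m,
          'd L z h = dotv (gx z) h.1 + dotv (gy z) h.2) ->
     (* convex in x for fixed y *)
     (forall (y : 'rV[R]_m) (x1 x2 : 'rV[R]_n) (t : R), 0 <= t -> t <= 1 ->
        L (t *: x1 + (1 - t) *: x2, y) <= t * L (x1, y) + (1 - t) * L (x2, y)) ->
     (* concave in y for fixed x *)
     (forall (x : 'rV[R]_n) (y1 y2 : 'rV[R]_m) (t : R), 0 <= t -> t <= 1 ->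
        t * L (x, y1) + (1 - t) * L (x, y2) <= L (x, t *: y1 + (1 - t) *: y2)) ->
     (* G(z) = (grad_x L, - grad_y L) is Rs-Lipschitz *)
     (forall z w : 'rV[R]_n * 'rV[R]_m,
        znorm (zsub ((gx z, - gy z) : zpt R n m) (gx w, - gy w))
          <= Rs * znorm (zsub (z : zpt R n m) w)) ->
     (* zs is a saddle point *)
     (forall (x : 'rV[R]_n) (y : 'rV[R]_m),
        L (zs.1, y) <= L zs /\ L zs <= L (x, zs.2)) ->
     forall k : nat,
       let zk := eagc (fun z : zpt R n m => (gx z, - gy z)) (8 * Rs)^-1 z0 k in
       zsqnorm ((gx zk, gy zk) : zpt R n m)
         <= 260 * Rs ^+ 2 * zsqnorm (zsub (z0 : zpt R n m) zs) / (k.+1%:R) ^+ 2).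
Proof.
split=> [a|n m L gx gy zs z0 L_grad L_convex L_concave G_lip saddle k].
  exact: eagc_coeffs_ge0.
rewrite /= -zsqnorm_pairN.
apply: (eagc_grad_sqnorm_le Rs (saddle_grad gx gy) z0 zs) => //.
- by move=> z w; apply: zsqnorm_le_of_znorm_le (ltW hRs) (G_lip z w).
- exact: saddle_grad_monotone L_grad L_convex L_concave.
- exact: saddle_grad_eq0 L_grad zs saddle.
Qed.
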